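(* Fix integers $m\ge 1$ and $n\ge 0$. There is a function $P_{n,m}:\mathbb{Z}_{\ge 0}\to\mathbb{Q}$ (in fact a polynomial) depending only on $n$ and $m$ with the following property. For every set $a=\{a_1,\dots,a_m\}$ of $m$ multiplicatively independent integers $a_i\ge 2$, there is $N=N(n,a)$ such that for every $s\ge 1$ and all positive integers $k_1,\dots,k_s$ for which $k_1+1,\dots,k_s+1$ are primes larger than $N$, the number of $n$-element independent sets of the disjoint union $G(a,k_1)+G(a,k_2)+\cdots+G(a,k_s)$ equals $P_{n,m}(k_1+\cdots+k_s)$. In other words, this number depends only on $n$, $m$ and $\sum_i k_i$.
   Context: A set $\{a_1,\dots,a_m\}$ of positive integers is multiplicatively independent if $a_1^{i_1}\cdots a_m^{i_m}=1$ with integers $i_1,\dots,i_m$ implies $i_1=\dots=i_m=0$. For such $a$ and a positive integer $k$, $G(a,k)$ is the simple graph with vertex set $\{1,2,\dots,k\}$ in which distinct vertices $i,j$ are adjacent if and only if $i\equiv a_rj\pmod{k+1}$ or $j\equiv a_ri\pmod{k+1}$ for some $1\le r\le m$. $G_1+G_2+\cdots+G_s$ denotes the disjoint union of graphs. An independent set is a set of vertices no two of which are adjacent. *)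

From HB Require Import structures.
From mathcomp Require Import all_boot all_order all_algebra.
Set Implicit Arguments. Unset Strict Implicit. Unset Printing Implicit Defensive.
Import Order.TTheory GRing.Theory Num.Theory.

Definition mult_indep (a : seq nat) : Prop :=
  forall e : 'I_(size a) -> int,
    (\prod_(r < size a) ((nth 0%N a r)%:R : rat) ^ (e r) = 1)%R ->
    forall r, e r = 0%R.

(* Adjacency in G(a,k) on vertex set {1,...,k}. *)
Definition gadj (a : seq nat) (k i j : nat) : bool :=
  (i != j) &&
  has (fun ar => (i == ar * j %[mod k.+1]) || (j == ar * i %[mod k.+1])) a.

(* Vertices of G(a,k_1)+...+G(a,k_s), ks = [:: k_1; ...; k_s]:
   the pair (t, i) stands for vertex i.+1 of the t-th component. *)
Definition uvert (ks : seq nat) : finType :=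
  {t : 'I_(size ks) & 'I_(nth 0%N ks t)}.

Definition uadj (a ks : seq nat) (u v : uvert ks) : bool :=
  (tag u == tag v) &&
  gadj a (nth 0%N ks (tag u)) (nat_of_ord (tagged u)).+1 (nat_of_ord (tagged v)).+1.

Definition indep_set (a ks : seq nat) (S : {set uvert ks}) : bool :=
  [forall u in S, forall v in S, ~~ uadj a u v].

Definition num_indep (n : nat) (a ks : seq nat) : nat :=
  #|[set S : {set uvert ks} | (#|S| == n) && indep_set a S]|.

From HB Require Import structures.
From mathcomp Require Import all_boot all_order all_algebra.
From mathcomp Require Import zify ring.
Import Order.TTheory GRing.Theory Num.Theory.
Set Implicit Arguments. Unset Strict Implicit. Unset Printing Implicit Defensive.

(* For a prime p = k + 1 the vertices of G(a, k) are the units of F_p, and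
   Z^m acts on them by multiplication with a_1^{d_1} ... a_m^{d_m}; two
   vertices are adjacent iff one is the image of the other under a unit vector
   +-e_r. Multiplicative independence of a makes this action free on vectors
   with small entries as soon as p is large, and the same then holds on the
   disjoint union of the G(a, k_t).
   Then n! times the number of n-element independent sets is the sum, over
   all n-tuples x, of the product over i < j of the weights
   1 - [x_j = x_i] - sum_r [x_j = x_i . e_r] - sum_r [x_j = x_i . -e_r].
   Expanding this product gives a fixed signed combination of systems of
   equations x_j = x_i . d with bounded shifts d, and for a free action the
   number of solutions of such a system is a polynomial in the number of points
   that depends only on the system: eliminating x_0 either leaves it free (a
   factor |V|) or determines it, turning its other equations into equations
   among the remaining variables. *)

Local Open Scope ring_scope.

(** * Solutions of systems of equations in a free Z^m-set *)

Definition bounded m (M : nat) (d : 'rV[int]_m) : bool :=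
  [forall r, (`|d ord0 r| <= M)%N].

Lemma bounded0 m M : bounded M (0 : 'rV[int]_m).
Proof. by apply/forallP => r; rewrite mxE. Qed.

Lemma boundedN m M (d : 'rV[int]_m) : bounded M d -> bounded M (- d).
Proof. by move=> /forallP bd; apply/forallP => r; rewrite mxE abszN. Qed.

Lemma boundedW m M M' (d : 'rV[int]_m) : (M <= M')%N -> bounded M d -> bounded M' d.
Proof. by move=> le /forallP bd; apply/forallP => r; apply: leq_trans (bd r) le. Qed.

Lemma boundedB m M (d e : 'rV[int]_m) :
  bounded M d -> bounded M e -> bounded (M * 2) (d - e).
Proof.
move=> /forallP bd /forallP be; apply/forallP => r; rewrite !mxE.
have := leqD_dist (d ord0 r) 0 (e ord0 r); rewrite subr0 sub0r abszN.
by move/leq_trans; apply; rewrite muln2 -addnn leq_add.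
Qed.

Lemma bounded_delta m (r : 'I_m) : bounded 1 (delta_mx 0 r).
Proof. by apply/forallP => i; rewrite mxE; case: (_ && _). Qed.

Fixpoint all_seqs (V : finType) (n : nat) : seq (seq V) :=
  if n is n'.+1 then [seq x :: s | x <- enum V, s <- all_seqs V n'] else [:: [::]].

Lemma all_seqs_uniq (V : finType) n : uniq (all_seqs V n).
Proof.
elim: n => [|n IH] //=; apply: allpairs_uniq => //; first exact: enum_uniq.
by move=> [x s] [y t] _ _ /= [-> ->].
Qed.

Lemma mem_all_seqs (V : finType) n s : (s \in all_seqs V n) = (size s == n).
Proof.
elim: n s => [|n IH] s /=; first by rewrite inE; case: s.
apply/allpairsPdep/idP => [[x [t [_ ht ->]]] | ]; first by rewrite /= eqSS -IH.
by case: s => [|x s] //= hs; exists x, s; rewrite mem_enum IH.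
Qed.

(* [Atom i j d] stands for the equation [x_j = x_i . d] on a tuple [x] of
   points of a set acted on by Z^m. *)
Record atom m := Atom { src : nat; dst : nat; shift : 'rV[int]_m }.
Arguments shift {m}.

Definition atom_triple m (t : atom m) := (src t, dst t, shift t).
Definition triple_atom m (t : nat * nat * 'rV[int]_m) := Atom t.1.1 t.1.2 t.2.
Lemma atom_tripleK m : cancel (@atom_triple m) (@triple_atom m). Proof. by case. Qed.
HB.instance Definition _ m := Equality.copy (atom m) (can_type (@atom_tripleK m)).

(* Elimination of [x_0]: an equation relating [x_0] to some [x_j] is
   rewritten as [x_0 = x_j . d] and recorded as [(j - 1, d)]; equations not
   involving [x_0] are reindexed. *)
Definition head_link m (t : atom m) : option (nat * 'rV[int]_m) :=
  match src t, dst t with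
  | 0, j.+1 => Some (j, - shift t)
  | i.+1, 0 => Some (i, shift t)
  | _, _ => None
  end.
Arguments head_link {m}.

Definition tail_atom m (t : atom m) : option (atom m) :=
  match src t, dst t with
  | i.+1, j.+1 => Some (Atom i j (shift t))
  | _, _ => None
  end.
Arguments tail_atom {m}.

Definition head_loops_trivial m (ats : seq (atom m)) : bool :=
  all (fun t => [|| src t != 0%N, dst t != 0%N | shift t == 0]) ats.

(* If [x_0] is linked to no other variable it ranges freely, contributing a
   factor [X]; otherwise its first link determines it and every other link
   becomes an equation between the remaining variables. *)
Fixpoint solution_poly m (n : nat) (ats : seq (atom m)) : {poly rat} :=
  if n is n'.+1 then
    if head_loops_trivial ats then
      match pmap head_link ats with
      | [::] => solution_poly n' (pmap tail_atom ats) * 'X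
      | (i, d) :: L =>
          solution_poly n' (pmap tail_atom ats ++ [seq Atom i u.1 (d - u.2) | u <- L])
      end
    else 0
  else (all (fun t => shift t == 0) ats)%:R%:P.

Lemma bounded_tail_atoms m B (ats : seq (atom m)) :
  all (bounded B \o shift) ats -> all (bounded B \o shift) (pmap tail_atom ats).
Proof. by rewrite all_pmap; apply: sub_all => -[[|i] [|j] d]. Qed.

Lemma bounded_head_links m B (ats : seq (atom m)) :
  all (bounded B \o shift) ats -> all (bounded B \o snd) (pmap head_link ats).
Proof. by rewrite all_pmap; apply: sub_all => -[[|i] [|j] d] //= /boundedN. Qed.

Section Solutions.
Variables (V : finType) (m : nat) (act : V -> 'rV[int]_m -> V).

Definition free_upto (M : nat) : Prop :=
  forall x d, bounded M d -> act x d = x -> d = 0.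

Lemma free_uptoW M M' : (M <= M')%N -> free_upto M' -> free_upto M.
Proof. by move=> le free x d /(boundedW le); apply: free. Qed.

Hypothesis actA : forall x d e, act (act x d) e = act x (d + e).
Hypothesis act0 : forall x, act x 0 = x.

Lemma act_eq_act y d z e : (act y d == act z e) = (z == act y (d - e)).
Proof.
apply/eqP/eqP => [h | ->]; last by rewrite actA addrNK.
have : act (act z e) (- e) = act (act y d) (- e) by rewrite h.
by rewrite !actA subrr act0.
Qed.

Lemma eq_act_opp x y d : (y == act x d) = (x == act y (- d)).
Proof. by rewrite -{1}[y]act0 act_eq_act sub0r. Qed.

Lemma act_free_eq B x d : free_upto B -> bounded B d -> (x == act x d) = (d == 0).
Proof.
move=> free bd; apply/eqP/eqP => [/esym /(free _ _ bd) //| ->].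
by rewrite act0.
Qed.

Variable x0 : V.

Definition sat (s : seq V) (t : atom m) : bool :=
  nth x0 s (dst t) == act (nth x0 s (src t)) (shift t).

Definition num_solutions (n : nat) (ats : seq (atom m)) : rat :=
  \sum_(s <- all_seqs V n) \prod_(t <- ats) (sat s t)%:R.

Lemma prod_sat_nil B (ats : seq (atom m)) :
  free_upto B -> all (bounded B \o shift) ats ->
  \prod_(t <- ats) (sat [::] t)%:R = (all (fun t => shift t == 0) ats)%:R :> rat.
Proof.
move=> free; elim: ats => [|[i j d] ats IH] /=; first by rewrite big_nil.
case/andP=> bd /IH IH'.
by rewrite big_cons IH' /sat /= !nth_nil (act_free_eq _ free bd) -natrM mulnb.
Qed.

Lemma prod_sat_cons B (ats : seq (atom m)) x s :
  free_upto B -> all (bounded B \o shift) ats ->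
  \prod_(t <- ats) (sat (x :: s) t)%:R =
  (head_loops_trivial ats)%:R
    * \prod_(u <- pmap head_link ats) (x == act (nth x0 s u.1) u.2)%:R
    * \prod_(t <- pmap tail_atom ats) (sat s t)%:R :> rat.
Proof.
move=> free; elim: ats => [|[i j d] ats IH] /=; first by rewrite !big_nil !mulr1.
case/andP=> bd /IH IH'; rewrite big_cons IH' /head_loops_trivial /=.
case: i j bd => [|i] [|j] bd; rewrite /= ?big_cons /sat /=.
- by rewrite (act_free_eq _ free bd) -mulnb natrM; ring.
- by rewrite eq_act_opp; ring.
- by ring.
- by ring.
Qed.

Lemma sum_head_links (L : seq (nat * 'rV[int]_m)) i d s :
  \sum_(x <- enum V) \prod_(u <- (i, d) :: L) (x == act (nth x0 s u.1) u.2)%:R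
  = \prod_(u <- L) (sat s (Atom i u.1 (d - u.2)))%:R :> rat.
Proof.
rewrite big_enum /= (bigD1 (act (nth x0 s i) d)) //= big_cons eqxx mul1r.
rewrite [X in _ + X]big1 ?addr0 => [|x /negbTE nx]; last by rewrite big_cons /= nx mul0r.
by apply: eq_bigr => u _; rewrite /sat act_eq_act.
Qed.

(* Each elimination step replaces shifts by differences of shifts, which
   doubles their bound. *)
Lemma num_solutionsE n B (ats : seq (atom m)) :
  all (bounded B \o shift) ats -> free_upto (B * 2 ^ n) ->
  num_solutions n ats = (solution_poly n ats).[#|V|%:R].
Proof.
elim: n B ats => [|n IH] B ats bats free.
  rewrite expn0 muln1 in free.
  by rewrite /num_solutions big_seq1 hornerC (prod_sat_nil free bats).
have freeB : free_upto B by apply: free_uptoW free; rewrite leq_pmulr ?expn_gt0.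
rewrite /num_solutions /= big_allpairs_dep /= exchange_big /=.
under eq_bigr => s _ do under eq_bigr => x _ do rewrite (prod_sat_cons x s freeB bats).
case: (head_loops_trivial ats); last first.
  by rewrite horner0 big1 // => s _; rewrite big1 // => x _; rewrite !mul0r.
case E: (pmap head_link ats) => [|[i d] L].
  rewrite hornerMX -(IH B) ?bounded_tail_atoms //; last first.
    by apply: free_uptoW free; rewrite expnS mulnCA leq_pmull.
  rewrite /num_solutions mulr_suml; apply: eq_bigr => s _.
  under eq_bigr => x _ do rewrite big_nil !mul1r.
  by rewrite big_enum /= sumr_const mulr_natr.
rewrite -(IH (B * 2)%N); first last.
- by rewrite -mulnA -expnS.
- have bats2 : all (bounded (B * 2) \o shift) ats.
    by apply: sub_all bats => t /=; apply: boundedW; rewrite leq_pmulr.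
  have := bounded_head_links bats; rewrite E /= => /andP[bd bL].
  rewrite all_cat bounded_tail_atoms //= all_map.
  by apply/allP => u /(allP bL) bu /=; apply: boundedB.
rewrite /num_solutions; apply: eq_bigr => s _.
rewrite big_cat /= big_map -(sum_head_links L i d s) mulr_sumr.
by apply: eq_bigr => x _; rewrite mul1r mulrC.
Qed.

End Solutions.

(** * Expansion of the product of pairwise weights *)

Definition unit_shifts m : seq 'rV[int]_m :=
  [seq delta_mx 0 r | r <- enum 'I_m] ++ [seq - delta_mx 0 r | r <- enum 'I_m].

Lemma bounded_unit_shifts m : all (bounded 1) (unit_shifts m).
Proof.
rewrite all_cat !all_map; apply/andP; split; apply/allP => r _ /=.
  exact: bounded_delta.
exact/boundedN/bounded_delta.
Qed.

Fixpoint pair_prod (T : Type) (w : T -> T -> rat) (s : seq T) : rat :=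
  if s is x :: s' then (\prod_(y <- s') w x y) * pair_prod w s' else 1.

(* A form [[:: (c_1, A_1); ...]] stands for the function
   [s |-> \sum_i c_i * [s satisfies every equation of A_i]]. *)
Definition form m := seq (rat * seq (atom m)).

Definition form_mul m (P Q : form m) : form m :=
  [seq (c.1 * e.1, c.2 ++ e.2) | c <- P, e <- Q].

Definition form1 m : form m := [:: (1, [::])].

Definition form_shift m (P : form m) : form m :=
  [seq (c.1, [seq Atom (src t).+1 (dst t).+1 (shift t) | t <- c.2]) | c <- P].

Definition weight_form m (j : nat) : form m :=
  (1, [::]) :: [seq (-1, [:: Atom 0 j d]) | d <- 0 :: unit_shifts m].

Fixpoint pair_form m (n : nat) : form m :=
  if n is n'.+1 then
    form_mul (foldr (@form_mul m) (form1 m) [seq weight_form m j.+1 | j <- iota 0 n'])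
             (form_shift (pair_form m n'))
  else form1 m.

Definition pair_poly m (n : nat) : {poly rat} :=
  \sum_(c <- pair_form m n) c.1 *: solution_poly n c.2.

Definition form_bounded m (B : nat) (P : form m) : bool :=
  all (fun c => all (bounded B \o shift) c.2) P.

Lemma form_bounded_mul m B (P Q : form m) :
  form_bounded B P -> form_bounded B Q -> form_bounded B (form_mul P Q).
Proof.
move=> bP bQ; rewrite /form_bounded; apply/allP => _ /allpairsP[[c e] [cP eQ ->]] /=.
by rewrite all_cat (allP bP c cP) (allP bQ e eQ).
Qed.

Lemma pair_form_bounded m n : form_bounded 1 (pair_form m n).
Proof.
elim: n => [|n IH] //=; apply: form_bounded_mul; last first.
  rewrite /form_bounded /form_shift all_map.
  by apply/allP => c /(allP IH) /=; rewrite all_map.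
elim: (iota 0 n) => [|j l IHl] //=; apply: form_bounded_mul => //=.
rewrite bounded0 /form_bounded all_map; apply/allP => d /(allP (bounded_unit_shifts m)).
by rewrite /= andbT.
Qed.

Section Forms.
Variables (V : finType) (m : nat) (act : V -> 'rV[int]_m -> V) (x0 : V).

Definition weight (x y : V) : rat := 1 - \sum_(d <- 0 :: unit_shifts m) (y == act x d)%:R.

Definition eval_form (P : form m) (s : seq V) : rat :=
  \sum_(c <- P) c.1 * \prod_(t <- c.2) (sat act x0 s t)%:R.

Lemma eval_form_mul P Q s : eval_form (form_mul P Q) s = eval_form P s * eval_form Q s.
Proof.
rewrite /eval_form /form_mul big_allpairs_dep /= mulr_suml; apply: eq_bigr => c _.
by rewrite mulr_sumr; apply: eq_bigr => e _ /=; rewrite big_cat /=; ring.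
Qed.

Lemma eval_form1 s : eval_form (form1 m) s = 1.
Proof. by rewrite /eval_form big_seq1 big_nil mulr1. Qed.

Lemma eval_form_shift P x s : eval_form (form_shift P) (x :: s) = eval_form P s.
Proof. by rewrite /eval_form big_map; apply: eq_bigr => c _; rewrite big_map. Qed.

Lemma eval_weight_form j x s :
  eval_form (weight_form m j.+1) (x :: s) = weight x (nth x0 s j).
Proof.
rewrite /eval_form /weight big_cons big_map big_nil /= mulr1 -sumrN.
by congr (_ + _); apply: eq_bigr => d _; rewrite big_seq1 mulN1r.
Qed.

Lemma eval_pair_form n s : size s = n -> eval_form (pair_form m n) s = pair_prod weight s.
Proof.
elim: n s => [|n IH] [|x s] //=; first by rewrite eval_form1.
case=> hs; rewrite eval_form_mul eval_form_shift IH //; congr (_ * _).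
rewrite (big_nth x0) hs /index_iota subn0.
elim: (iota 0 n) => [|j l IHl] /=; first by rewrite eval_form1 big_nil.
by rewrite eval_form_mul IHl eval_weight_form big_cons.
Qed.

Hypothesis actA : forall x d e, act (act x d) e = act x (d + e).
Hypothesis act0 : forall x, act x 0 = x.

Lemma sum_pair_prod_weight n :
  free_upto act (2 ^ n) ->
  \sum_(s <- all_seqs V n) pair_prod weight s = (pair_poly m n).[#|V|%:R].
Proof.
move=> free; rewrite big_seq (eq_bigr (eval_form (pair_form m n))); last first.
  by move=> s; rewrite mem_all_seqs => /eqP /eval_pair_form.
rewrite -big_seq /eval_form exchange_big /pair_poly horner_sum; apply: eq_big_seq => c cP.
rewrite hornerZ -mulr_sumr -(num_solutionsE actA act0 x0 (B := 1)) //.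
  exact: (allP (pair_form_bounded m n)).
by rewrite mul1n.
Qed.

End Forms.

(** * Independent sets *)

Lemma uniq_shifts m : uniq (0 :: unit_shifts m).
Proof.
have delta_entry (r r' : 'I_m) : (delta_mx 0 r : 'rV[int]_m) ord0 r' = (r == r')%:R.
  by rewrite mxE /= eq_sym.
have delta_inj : injective (fun r : 'I_m => delta_mx 0 r : 'rV[int]_m).
  by move=> r r' /matrixP /(_ ord0 r); rewrite !delta_entry eqxx; case: eqP.
rewrite /unit_shifts cons_uniq mem_cat negb_or cat_uniq !map_inj_uniq -?enumT;
  rewrite ?enum_uniq /= ?andbT //; last by move=> r r' /oppr_inj /delta_inj.
rewrite -andbA; apply/and3P; split.
- by apply/mapP => -[r _] /matrixP /(_ ord0 r); rewrite delta_entry mxE eqxx.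
- by apply/mapP => -[r _] /matrixP /(_ ord0 r); rewrite [RHS]mxE delta_entry mxE eqxx.
- apply/hasPn => _ /mapP[r _ ->]; apply/mapP => -[r' _] /matrixP /(_ ord0 r).
  by rewrite [LHS]mxE !delta_entry eqxx; case: eqP.
Qed.

Lemma sumr_eq_map (R : pzSemiRingType) (T : Type) (U : eqType) (f : T -> U) (r : seq T) y :
  uniq (map f r) -> \sum_(d <- r) (y == f d)%:R = (y \in map f r)%:R :> R.
Proof.
move=> /count_uniq_mem <-; elim: r => [|d r IH]; first by rewrite big_nil.
by rewrite big_cons IH /= natrD eq_sym.
Qed.

Lemma unit_shiftsN m (d : 'rV[int]_m) : (- d \in unit_shifts m) = (d \in unit_shifts m).
Proof.
rewrite !mem_cat orbC; congr (_ || _); apply/mapP/mapP => -[r _ h];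
  exists r; rewrite ?mem_enum //.
- exact: oppr_inj.
- by rewrite h.
- by rewrite -h opprK.
- by rewrite h opprK.
Qed.

Section Weight.
Variables (V : finType) (m : nat) (act : V -> 'rV[int]_m -> V).
Hypothesis actA : forall x d e, act (act x d) e = act x (d + e).
Hypothesis act0 : forall x, act x 0 = x.

Lemma mem_act_unit_shifts x y :
  (y \in [seq act x d | d <- unit_shifts m]) = (x \in [seq act y d | d <- unit_shifts m]).
Proof.
by apply/mapP/mapP => -[d ds /eqP]; rewrite eq_act_opp // => /eqP h;
  exists (- d); rewrite ?unit_shiftsN // opprK in h *.
Qed.

Hypothesis free2 : free_upto act 2.

Lemma act_inj_bounded1 x d e : bounded 1 d -> bounded 1 e -> act x d = act x e -> d = e.
Proof.
move=> bd be h; apply/eqP; rewrite -subr_eq0; apply/eqP.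
by apply: (@free2 x _ (boundedB bd be)); rewrite -actA h actA subrr act0.
Qed.

Lemma weightE x y :
  weight act x y = ((x != y) && (y \notin [seq act x d | d <- unit_shifts m]))%:R.
Proof.
have bshifts : all (bounded 1) (0 :: unit_shifts m) by rewrite /= bounded0 bounded_unit_shifts.
have uniq_act : uniq [seq act x d | d <- 0 :: unit_shifts m].
  rewrite map_inj_in_uniq ?uniq_shifts // => d e /(allP bshifts) bd /(allP bshifts) be.
  exact: act_inj_bounded1.
rewrite /weight (sumr_eq_map _ y uniq_act) /= act0 inE (eq_sym y).
by case: (x == y); case: (y \in _).
Qed.

End Weight.

Definition independent (T : finType) (e : rel T) (S : {set T}) : bool :=
  [forall u in S, forall v in S, ~~ e u v].

Lemma prodr_bool (R : pzSemiRingType) (T : Type) (s : seq T) (b : pred T) :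
  \prod_(y <- s) (b y)%:R = (all b s)%:R :> R.
Proof.
elim: s => [|x s IH]; first by rewrite big_nil.
by rewrite big_cons IH /= -natrM mulnb.
Qed.

Section Independent.
Variables (T : finType) (e : rel T).
Hypothesis e_sym : symmetric e.
Hypothesis e_irr : irreflexive e.

Lemma independentU1 x S :
  independent e (x |: S) = [forall y in S, ~~ e x y] && independent e S.
Proof.
apply/forall_inP/andP => [h | [/forall_inP hx /forall_inP hS] u].
  split; apply/forall_inP => u uS.
    by move/forall_inP: (h x (setU11 x S)); apply; rewrite setU1r.
  by apply/forall_inP => v vS; move/forall_inP: (h u (setU1r x uS)); apply; rewrite setU1r.
case/setU1P => [-> | uS]; apply/forall_inP => v /setU1P [-> | vS].
- by rewrite e_irr.
- exact: hx.
- by rewrite e_sym; apply: hx.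
- by move/forall_inP: (hS u uS); apply.
Qed.

Lemma pair_prodE (w : T -> T -> rat) :
  (forall x y, w x y = ((x != y) && ~~ e x y)%:R) ->
  forall s, pair_prod w s = (uniq s && independent e [set x in s])%:R.
Proof.
move=> hw; elim=> [|x s IH] /=.
  suff -> : independent e [set x in [::]] by [].
  by apply/forall_inP => u; rewrite inE.
rewrite IH (eq_bigr _ (fun y _ => hw x y)) (prodr_bool rat) -natrM mulnb.
have -> : [set z in x :: s] = x |: [set z in s] by apply/setP => z; rewrite !inE.
have -> : all (fun y => (x != y) && ~~ e x y) s =
          (x \notin s) && [forall y in [set z in s], ~~ e x y].
  apply/allP/andP => [h | [xs /forall_inP h] y ys].
    split; first by apply/negP => /h; rewrite eqxx.
    by apply/forall_inP => y; rewrite inE => /h /andP[].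
  by rewrite h ?inE // andbT; apply: contraNneq xs => ->.
rewrite independentU1; set b := [forall y in _, _].
by case: (x \notin s) (uniq s) b => [] [] [].
Qed.

End Independent.

Lemma perm_eq_enum_set (T : finType) (S : {set T}) s :
  perm_eq s (enum S) = uniq s && (S == [set x in s]).
Proof.
apply/idP/andP => [ps | [us /eqP ->]].
  split; first by rewrite (perm_uniq ps) enum_uniq.
  by apply/eqP/setP => x; rewrite inE (perm_mem ps) mem_enum.
by apply: uniq_perm; rewrite ?enum_uniq // => x; rewrite mem_enum inE.
Qed.

Lemma count_perm_enum (T : finType) n (S : {set T}) :
  count (perm_eq^~ (enum S)) (all_seqs T n) = if #|S| == n then n`! else 0%N.
Proof.
case: eqP => hS; last first.
  apply/eqP; rewrite -leqn0 leqNgt -has_count; apply/hasP => -[s].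
  by rewrite mem_all_seqs => /eqP sn /perm_size; rewrite -cardE sn => /esym.
rewrite -size_filter -[in RHS]hS cardE -size_permutations ?enum_uniq //.
apply: perm_size; apply: uniq_perm.
- exact: filter_uniq (all_seqs_uniq T n).
- exact: permutations_uniq.
move=> s; rewrite mem_filter mem_permutations mem_all_seqs.
by case ps: (perm_eq s _) => //=; apply/eqP; rewrite (perm_size ps) -hS cardE.
Qed.

Lemma sum_uniq_seqs_set (T : finType) n (P : pred {set T}) :
  \sum_(s <- all_seqs T n) (uniq s && P [set x in s])%:R =
  (n`! * #|[set S : {set T} | (#|S| == n) && P S]|)%:R :> rat.
Proof.
have by_set s : (uniq s && P [set x in s])%:R =
    \sum_(S : {set T}) (perm_eq s (enum S) && P S)%:R :> rat.
  rewrite (bigD1 [set x in s]) //= big1 ?addr0 => [|S nS].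
    by rewrite perm_eq_enum_set eqxx andbT.
  by rewrite perm_eq_enum_set (negbTE nS) andbF.
rewrite (eq_bigr _ (fun s _ => by_set s)) exchange_big /=.
rewrite natrM -sum1_card natr_sum mulr_sumr [RHS]big_mkcond /=; apply: eq_bigr => S _.
rewrite inE; case: (P S); last by rewrite andbF big1 // => s _; rewrite andbF.
rewrite andbT.
have -> : (if #|S| == n then n`!%:R * 1 else 0) =
          (count (perm_eq^~ (enum S)) (all_seqs T n))%:R :> rat.
  by rewrite count_perm_enum mulr1; case: ifP.
rewrite -sum1_count natr_sum [RHS]big_mkcond /=.
by apply: eq_bigr => s _; rewrite andbT; case: (perm_eq _ _).
Qed.

(* [x0] is only used as the default value of [nth]. *)
Lemma card_independent_sets (V : finType) m (act : V -> 'rV[int]_m -> V) (e : rel V)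
    (x0 : V) n :
  (forall x d e, act (act x d) e = act x (d + e)) -> (forall x, act x 0 = x) ->
  free_upto act (2 ^ n.+1) ->
  (forall x y, e x y = (x != y) && (y \in [seq act x d | d <- unit_shifts m])) ->
  #|[set S : {set V} | (#|S| == n) && independent e S]|%:R
    = ((n`!%:R)^-1 *: pair_poly m n).[#|V|%:R] :> rat.
Proof.
move=> actA act0 free eE.
have e_sym : symmetric e by move=> x y; rewrite !eE eq_sym mem_act_unit_shifts.
have e_irr : irreflexive e by move=> x; rewrite eE eqxx.
have free2 : free_upto act 2.
  by apply: free_uptoW free; rewrite expnS leq_pmulr ?expn_gt0.
have freen : free_upto act (2 ^ n) by apply: free_uptoW free; rewrite leq_pexp2l.
have weight_adj x y : weight act x y = ((x != y) && ~~ e x y)%:R.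
  by rewrite (weightE actA act0 free2) eE; case: (x != y).
rewrite hornerZ -(sum_pair_prod_weight x0 actA act0 freen).
rewrite (eq_bigr _ (fun s _ => pair_prodE e_sym e_irr weight_adj s)) sum_uniq_seqs_set.
by rewrite natrM mulKf // pnatr_eq0 -lt0n fact_gt0.
Qed.

(** * The multiplicative action on G(a, k) *)

Definition mpow (R : unitRingType) (a : seq nat) (d : 'rV[int]_(size a)) : R :=
  \prod_(r < size a) (nth 0%N a r)%:R ^ d ord0 r.
Arguments mpow : clear implicits.

Lemma mult_indep_mpow a d : mult_indep a -> mpow rat a d = 1 -> d = 0.
Proof. by move=> ind /ind eq0; apply/rowP => r; rewrite mxE eq0. Qed.

Definition posz_part (z : int) : nat := if z is Posz n then n else 0.
Definition negz_part (z : int) : nat := if z is Negz n then n.+1 else 0.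

Lemma exprz_parts (R : unitRingType) (x : R) z : x ^ z = x ^+ posz_part z / x ^+ negz_part z.
Proof. by case: z => n /=; rewrite /exprz ?expr0 ?invr1 ?mulr1 ?mul1r. Qed.

Definition mpow_num (a : seq nat) (d : 'rV[int]_(size a)) : nat :=
  \prod_(r < size a) nth 0%N a r ^ posz_part (d ord0 r).
Definition mpow_den (a : seq nat) (d : 'rV[int]_(size a)) : nat :=
  \prod_(r < size a) nth 0%N a r ^ negz_part (d ord0 r).
Arguments mpow_num : clear implicits.
Arguments mpow_den : clear implicits.

Lemma mpowE (F : fieldType) a d : mpow F a d = (mpow_num a d)%:R / (mpow_den a d)%:R.
Proof.
rewrite /mpow_num /mpow_den !natr_prod -prodfV -big_split /=; apply: eq_bigr => r _.
by rewrite exprz_parts !natrX.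
Qed.

Definition pow_bound (a : seq nat) (M : nat) : nat := \prod_(r < size a) nth 0%N a r ^ M.

Section PowBound.
Variables (a : seq nat) (M : nat).
Hypothesis a_ge2 : all (fun x => 2 <= x)%N a.

Lemma nth_gt0 (r : 'I_(size a)) : (0 < nth 0%N a r)%N.
Proof. by have := all_nthP 0%N a_ge2 r (ltn_ord r); case: (nth _ _ _). Qed.

Lemma nth_le_pow_bound (r : 'I_(size a)) : (0 < M)%N -> (nth 0%N a r <= pow_bound a M)%N.
Proof.
move=> M_gt0; rewrite /pow_bound (bigD1 r) //= -[X in (X <= _)%N]muln1.
apply: leq_mul; first by rewrite -{1}[nth _ _ _]expn1 leq_pexp2l ?nth_gt0.
by rewrite prodn_gt0 // => i; rewrite expn_gt0 nth_gt0.
Qed.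

Lemma mpow_parts_le d : bounded M d ->
  (mpow_num a d <= pow_bound a M)%N /\ (mpow_den a d <= pow_bound a M)%N.
Proof.
move=> /forallP bd; split; apply: leq_prod => r _; rewrite leq_pexp2l ?nth_gt0 //;
  apply: leq_trans (bd r); by case: (d ord0 r).
Qed.

End PowBound.

(* Numerator and denominator of [mpow rat a d] are below [p] and agree modulo
   [p], hence they are equal. *)
Lemma mpow_Fp_eq1 p a M d :
  prime p -> all (fun x => 2 <= x)%N a -> mult_indep a -> bounded M d ->
  (pow_bound a M < p)%N -> mpow 'F_p a d = 1 -> d = 0.
Proof.
move=> p_pr a_ge2 ind bd p_gt; rewrite mpowE => eq1.
have [num_le den_le] := mpow_parts_le a_ge2 bd.
have den_gt0 : (0 < mpow_den a d)%N by rewrite prodn_gt0 // => r; rewrite expn_gt0 nth_gt0.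
have den_neq0 : (mpow_den a d)%:R != 0 :> 'F_p.
  by apply/eqP => den0; move: eq1; rewrite den0 invr0 mulr0 => /eqP; rewrite eq_sym oner_eq0.
have : (mpow_num a d)%:R = (mpow_den a d)%:R :> 'F_p.
  by rewrite -(divfK den_neq0 (_%:R)) eq1 mul1r.
move=> /(congr1 val) /=; rewrite !val_Fp_nat // !modn_small ?(leq_ltn_trans _ p_gt) //.
move=> num_den.
by apply: (mult_indep_mpow ind); rewrite mpowE num_den divff // pnatr_eq0 -lt0n.
Qed.

Lemma mem_map_unit_shifts (T : eqType) m (f : 'rV[int]_m -> T) y :
  (y \in map f (unit_shifts m)) =
  [exists r, (y == f (delta_mx 0 r)) || (y == f (- delta_mx 0 r))].
Proof.
apply/mapP/existsP => [[d] | [r /orP[] /eqP ->]].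
- by rewrite mem_cat => /orP[] /mapP[r _ ->] ->; exists r; rewrite eqxx ?orbT.
- by exists (delta_mx 0 r); rewrite ?mem_cat ?map_f ?mem_enum.
- exists (- delta_mx 0 r) => //.
  by rewrite mem_cat (map_f (fun i => - delta_mx 0 i)) ?orbT ?mem_enum.
Qed.

Definition fp_of k (i : nat) : 'F_(k.+1) := i.+1%:R.

(* [i : 'I_k] stands for vertex [i.+1] of [G(a, k)], i.e. for the residue
   [fp_of k i]; the default [i] of [insubd] is never used, the product being a
   nonzero residue. *)
Definition mul_act a k (i : 'I_k) (d : 'rV[int]_(size a)) : 'I_k :=
  insubd i (nat_of_ord (fp_of k i * mpow 'F_(k.+1) a d)).-1.
Arguments mul_act a {k} i d.

Section MulAction.
Variables (a : seq nat) (k : nat).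
Hypothesis k1_prime : prime k.+1.
Hypothesis a_neq0 : forall r : 'I_(size a), (nth 0%N a r)%:R != 0 :> 'F_(k.+1).
Local Notation F := 'F_(k.+1).

Lemma Fp_val_lt (x : F) : (x < k.+1)%N.
Proof. by apply: leq_trans (ltn_ord x) _; rewrite (Fp_cast k1_prime). Qed.

Lemma Fp_valK (x : F) : (nat_of_ord x)%:R = x.
Proof. by apply: val_inj; rewrite /= val_Fp_nat // modn_small // Fp_val_lt. Qed.

Lemma val_fp_of (i : nat) : (i < k)%N -> nat_of_ord (fp_of k i) = i.+1.
Proof. by move=> ik; rewrite /fp_of val_Fp_nat // modn_small. Qed.

Lemma fp_of_inj : injective (fun i : 'I_k => fp_of k i).
Proof. by move=> i j /(congr1 val) /=; rewrite !val_fp_of // => -[] /val_inj. Qed.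

Lemma fp_of_neq0 (i : 'I_k) : fp_of k i != 0.
Proof. by apply/eqP => /(congr1 val) /=; rewrite val_fp_of. Qed.

Lemma mpowD d e : mpow F a (d + e) = mpow F a d * mpow F a e.
Proof.
by rewrite /mpow -big_split /=; apply: eq_bigr => r _; rewrite mxE exprzDr // unitfE.
Qed.

Lemma mpow0 : mpow F a 0 = 1.
Proof. by rewrite /mpow big1 // => r _; rewrite mxE expr0z. Qed.

Lemma mpow_neq0 d : mpow F a d != 0.
Proof. by apply/prodf_neq0 => r _; rewrite expfz_neq0. Qed.

Lemma mpow_delta r : mpow F a (delta_mx 0 r) = (nth 0%N a r)%:R.
Proof.
rewrite /mpow (bigD1 r) //= big1 => [|r' ne]; first by rewrite mxE !eqxx mulr1.
by rewrite mxE /= (negbTE ne) expr0z.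
Qed.

Lemma fp_of_mul_act (i : 'I_k) d : fp_of k (mul_act a i d) = fp_of k i * mpow F a d.
Proof.
set y := fp_of k i * mpow F a d.
have y_gt0 : (0 < nat_of_ord y)%N.
  rewrite lt0n; apply: contra (mulf_neq0 (fp_of_neq0 i) (mpow_neq0 d)) => /eqP y0.
  by apply/eqP/val_inj.
have y_le : ((nat_of_ord y).-1 < k)%N by have := Fp_val_lt y; lia.
by rewrite /mul_act -/y /fp_of val_insubd y_le prednK // Fp_valK.
Qed.

Lemma mul_actA (i : 'I_k) d e : mul_act a (mul_act a i d) e = mul_act a i (d + e).
Proof. by apply: fp_of_inj; rewrite !fp_of_mul_act mpowD mulrA. Qed.

Lemma mul_act0 (i : 'I_k) : mul_act a i 0 = i.
Proof. by apply: fp_of_inj; rewrite fp_of_mul_act mpow0 mulr1. Qed.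

Lemma mul_act_fixed (i : 'I_k) d : mul_act a i d = i -> mpow F a d = 1.
Proof.
move=> /(congr1 (fun j : 'I_k => fp_of k j)) /=; rewrite fp_of_mul_act => h.
by apply: (mulfI (fp_of_neq0 i)); rewrite h mulr1.
Qed.

Lemma eqmod_mul_act (i j : 'I_k) (r : 'I_(size a)) :
  (i.+1 == nth 0%N a r * j.+1 %[mod k.+1]) = (i == mul_act a j (delta_mx 0 r)).
Proof.
rewrite -(inj_eq fp_of_inj) fp_of_mul_act mpow_delta mulrC.
by rewrite /fp_of -natrM -(inj_eq val_inj) /= !val_Fp_nat.
Qed.

Lemma gadj_mul_act (i j : 'I_k) :
  gadj a k i.+1 j.+1 = (i != j) && (j \in [seq mul_act a i d | d <- unit_shifts (size a)]).
Proof.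
rewrite /gadj eqSS mem_map_unit_shifts; congr (_ && _).
have adj_at (r : 'I_(size a)) :
    (i.+1 == nth 0%N a r * j.+1 %[mod k.+1]) || (j.+1 == nth 0%N a r * i.+1 %[mod k.+1])
    = (j == mul_act a i (delta_mx 0 r)) || (j == mul_act a i (- delta_mx 0 r)).
  by rewrite !eqmod_mul_act (eq_act_opp mul_actA mul_act0) orbC.
apply/(has_nthP 0%N)/existsP => [[r ra] | [r]].
  by rewrite -[r]/(nat_of_ord (Ordinal ra)) adj_at; exists (Ordinal ra).
by rewrite -adj_at; exists r => //; apply: ltn_ord.
Qed.

End MulAction.

Definition uvert_act a ks (u : uvert ks) (d : 'rV[int]_(size a)) : uvert ks :=
  Tagged (fun t : 'I_(size ks) => 'I_(nth 0%N ks t)) (mul_act a (tagged u) d).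
Arguments uvert_act a {ks} u d.

Section Union.
Variables (a ks : seq nat) (M : nat).
Hypothesis a_ge2 : all (fun x => 2 <= x)%N a.
Hypothesis M_gt0 : (0 < M)%N.
Hypothesis ks_large : forall t : 'I_(size ks),
  prime (nth 0%N ks t).+1 /\ (pow_bound a M < (nth 0%N ks t).+1)%N.

Lemma nth_neq0_Fp (t : 'I_(size ks)) (r : 'I_(size a)) :
  (nth 0%N a r)%:R != 0 :> 'F_((nth 0%N ks t).+1).
Proof.
have [p_pr p_gt] := ks_large t.
apply/eqP => /(congr1 val) /=; rewrite val_Fp_nat // modn_small; last first.
  exact: leq_ltn_trans (nth_le_pow_bound a_ge2 r M_gt0) p_gt.
by move=> a0; have := nth_gt0 a_ge2 r; rewrite a0.
Qed.

Lemma uvert_actA (u : uvert ks) d e :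
  uvert_act a (uvert_act a u d) e = uvert_act a u (d + e).
Proof.
case: u => t i; have [p_pr _] := ks_large t.
by rewrite /uvert_act /= mul_actA //; apply: nth_neq0_Fp.
Qed.

Lemma uvert_act0 (u : uvert ks) : uvert_act a u 0 = u.
Proof.
case: u => t i; have [p_pr _] := ks_large t.
by rewrite /uvert_act /= mul_act0 //; apply: nth_neq0_Fp.
Qed.

Lemma uvert_act_free : mult_indep a -> free_upto (uvert_act a (ks := ks)) M.
Proof.
move=> a_indep [t i] d bd; have [p_pr p_gt] := ks_large t.
rewrite /uvert_act /= => eq_tagged; have fixed := eq_from_Tagged eq_tagged.
apply: (mpow_Fp_eq1 p_pr a_ge2 a_indep bd p_gt).
exact: mul_act_fixed p_pr (nth_neq0_Fp t) _ _ fixed.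
Qed.

Lemma uadjE (u v : uvert ks) :
  uadj a u v = (u != v) && (v \in [seq uvert_act a u d | d <- unit_shifts (size a)]).
Proof.
case: u v => [t i] [t' j]; rewrite /uadj /=.
have [e | ne] := eqVneq t t'; last first.
  by symmetry; apply/andP => -[_ /mapP[d _ /(congr1 tag) /= e]]; rewrite e eqxx in ne.
subst t'.
have [p_pr _] := ks_large t.
rewrite gadj_mul_act ?eq_Tagged //=; last exact: nth_neq0_Fp.
congr (_ && _); apply/mapP/mapP => -[d ds h]; exists d => //; first by rewrite h.
exact: eq_from_Tagged h.
Qed.

End Union.

Lemma card_uvert ks : #|uvert ks| = sumn ks.
Proof.
rewrite /uvert card_tagged; congr sumn.
rewrite (eq_map (fun t => card_ord _)) -[in RHS](mkseq_nth 0%N ks).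
by rewrite /mkseq -val_enum_ord -map_comp.
Qed.

Unset Implicit Arguments.

Theorem theorem3p1 (m n : nat) (hm : (1 <= m)%N) :
  exists P : {poly rat},
    forall a : seq nat,
      size a = m -> uniq a -> all (fun x => 2 <= x)%N a -> mult_indep a ->
      exists N : nat,
        forall ks : seq nat,
          (1 <= size ks)%N ->
          all (fun k => (0 < k)%N && prime k.+1 && (N < k.+1)%N) ks ->
          ((num_indep n a ks)%:R : rat) = (P.[(sumn ks)%:R])%R.
Proof.
exists ((n`!%:R)^-1 *: pair_poly m n) => a size_a _ a_ge2 a_indep; subst m.
exists (pow_bound a (2 ^ n.+1)) => ks ks_ne0 ks_large.
have large (t : 'I_(size ks)) :
    prime (nth 0%N ks t).+1 /\ (pow_bound a (2 ^ n.+1) < (nth 0%N ks t).+1)%N.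
  by have /andP[/andP[_ ?] ?] := all_nthP 0%N ks_large t (ltn_ord t).
have /andP[/andP[k0_gt0 _] _] := all_nthP 0%N ks_large 0 ks_ne0.
have M_gt0 : (0 < 2 ^ n.+1)%N by rewrite expn_gt0.
rewrite -card_uvert.
pose x0 : uvert ks := existT _ (Ordinal ks_ne0) (Ordinal k0_gt0).
apply: (card_independent_sets (act := uvert_act a) x0).
- exact: uvert_actA a_ge2 M_gt0 large.
- exact: uvert_act0 a_ge2 M_gt0 large.
- exact: uvert_act_free a_ge2 M_gt0 large a_indep.
- exact: uadjE a_ge2 M_gt0 large.
Qed.
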